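(* Let $n\ge1$ and let $H_1,H_2$ be irreducible subgroups of $SL(n,\mathbb{C})$. Then $Z_n(H_1)$ and $Z_n(H_2)$ are conjugate in $PSL(n,\mathbb{C})$ if and only if there exists an (abstract) group isomorphism $f:U_n(H_1)\to U_n(H_2)$ such that $f(\xi^kI_n)=\xi^kI_n$ for every integer $k$.
   Context: Let $\xi=e^{2\pi i/n}$; the center of $SL(n,\mathbb{C})$ is $\langle \xi I_n\rangle$, and $\pi_n:SL(n,\mathbb{C})\to PSL(n,\mathbb{C})$ is the quotient map. A subgroup $H\le SL(n,\mathbb{C})$ is irreducible if no nonzero proper subspace of $\mathbb{C}^n$ is $H$-invariant. $Z_n(H)$ is the centralizer of $\pi_n(H)$ in $PSL(n,\mathbb{C})$ and $U_n(H)=\pi_n^{-1}(Z_n(H))$. *)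

From HB Require Import structures.
From mathcomp Require Import all_boot all_order all_algebra.
Set Implicit Arguments. Unset Strict Implicit. Unset Printing Implicit Defensive.
Import Order.TTheory GRing.Theory Num.Theory.
Local Open Scope ring_scope.

(* The complex field is modelled by an arbitrary numClosedFieldType C
   (algebraically closed, characteristic 0), and xi is a given primitive
   n-th root of unity (playing the role of e^{2 pi i/n}). *)

Section Defs.
Variables (C : numClosedFieldType) (n : nat) (xi : C).

Definition inSL (A : 'M[C]_n) : Prop := \det A = 1.

Definition is_subgroup_SL (H : 'M[C]_n -> Prop) : Prop :=
  [/\ forall h, H h -> inSL h,
      H 1%:M,
      forall a b, H a -> H b -> H (a *m b)
    & forall a, H a -> H (invmx a)].

(* A subspace W is encoded as the column space of U^T, i.e. the
   row space of U (U : 'M_n); h W <= W  iff  (U *m h^T <= U)%MS. *)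
Definition irreducible_SL (H : 'M[C]_n -> Prop) : Prop :=
  forall U : 'M[C]_n,
    (forall h, H h -> (U *m h^T <= U)%MS) ->
    \rank U = 0%N \/ \rank U = n.

(* the quotient map pi_n : SL -> PSL; x and y have the same image in PSL *)
Definition pi_eq (x y : 'M[C]_n) : Prop :=
  exists k : nat, y = (xi ^+ k) *: x.

(* U_n(H) = pi_n^{-1}(Z_n(H)): g in SL with pi(g) commuting with all pi(h),
   i.e. g h = c h g for some central element c = xi^k I. *)
Definition U_n (H : 'M[C]_n -> Prop) (g : 'M[C]_n) : Prop :=
  inSL g /\ forall h, H h -> pi_eq (h *m g) (g *m h).

(* Z_n(H), represented by its (saturated) set of representatives in SL:
   an element pi(x) (x in SL) lies in Z_n(H) iff x lies in U_n(H). *)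
Definition Z_n (H : 'M[C]_n -> Prop) (x : 'M[C]_n) : Prop := U_n H x.

Definition Z_conj_PSL (H1 H2 : 'M[C]_n -> Prop) : Prop :=
  exists g, inSL g /\
    forall x, inSL x -> (Z_n H1 x <-> Z_n H2 (g *m x *m invmx g)).

Definition group_iso_U (H1 H2 : 'M[C]_n -> Prop) (f : 'M[C]_n -> 'M[C]_n) : Prop :=
  [/\ forall x, U_n H1 x -> U_n H2 (f x),
      forall x y, U_n H1 x -> U_n H1 y -> f x = f y -> x = y,
      forall y, U_n H2 y -> exists2 x, U_n H1 x & f x = y
    & forall x y, U_n H1 x -> U_n H1 y -> f (x *m y) = f x *m f y].

End Defs.

(* Conjugation by an element of SL_n maps U_n(H1) onto U_n(H2) and fixes the
   centre.  Conversely, if x in U_n(H) is not central then [x h = xi^k h x]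
   with [xi^k != 1] for some h in H (otherwise x would commute with the
   irreducible H, hence be scalar by Schur's lemma), and taking traces gives
   [\tr x = 0].  So an isomorphism f fixing the centre preserves traces.  The
   same vanishing makes non-proportional elements of U_n(H) orthogonal for
   [(a, b) |-> \tr (a^-1 b)], so U_n(H) is finite.  The inclusion of U_n(H1)
   and f are then two representations of a finite group with equal
   characters, hence similar in characteristic 0: [u B = B f(u)].  Rescaling
   [B^-1] by an n-th root of [\det B] yields the conjugating element of SL_n. *)

From HB Require Import structures.
From mathcomp Require Import all_boot all_order all_algebra all_fingroup.
From mathcomp Require Import pgroup mxrepresentation character zify.
From Stdlib Require Import Classical.
Import GRing.Theory Num.Theory.
Local Open Scope ring_scope.

Set Implicit Arguments. Unset Strict Implicit. Unset Printing Implicit Defensive.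

Section TraceOfLinMx.
Variable F : fieldType.

Lemma mxtrace_lin_mx a b (f : 'M[F]_(a, b) -> 'M[F]_(a, b)) :
  \tr (lin_mx f) = \sum_(i < a) \sum_(j < b) f (delta_mx i j) i j.
Proof.
rewrite /mxtrace (reindex (uncurry (@mxvec_index a b))) /=; last first.
  by case: (curry_mxvec_bij a b) => g gK Kg; exists g => x _; [apply: gK|apply: Kg].
rewrite pair_bigA /=; apply: eq_bigr => -[i j] _ /=.
by rewrite mxE /= vec_mx_delta mxvecE.
Qed.

Lemma mulmx_delta_diag a b (A : 'M[F]_a) (B : 'M[F]_b) i j :
  (A *m delta_mx i j *m B) i j = A i i * B j j.
Proof.
rewrite !mxE (bigD1 j) //= big1 ?addr0; last first.
  move=> k /negPf nk; rewrite !mxE big1 ?mul0r // => l _.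
  by rewrite !mxE nk andbF mulr0.
rewrite !mxE (bigD1 i) //= big1 ?addr0; last first.
  by move=> l /negPf nl; rewrite !mxE nl mulr0.
by rewrite !mxE !eqxx mulr1.
Qed.

Lemma mxtrace_lin_mx_sum (I : finType) (P : pred I) a b
    (A : I -> 'M[F]_a) (B : I -> 'M[F]_b) :
  \tr (lin_mx (fun X : 'M[F]_(a, b) => \sum_(k | P k) A k *m X *m B k)) =
  \sum_(k | P k) \tr (A k) * \tr (B k).
Proof.
rewrite mxtrace_lin_mx.
transitivity (\sum_(i < a) \sum_(j < b) \sum_(k | P k) A k i i * B k j j).
  apply: eq_bigr => i _; apply: eq_bigr => j _; rewrite summxE.
  by apply: eq_bigr => k _; rewrite mulmx_delta_diag.
under eq_bigr => i _ do rewrite exchange_big.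
rewrite exchange_big /=; apply: eq_bigr => k _.
by rewrite /mxtrace mulr_suml; apply: eq_bigr => i _; rewrite mulr_sumr.
Qed.

Lemma mxtrace_idem k (L : 'M[F]_k) : L *m L = L -> \tr L = (\rank L)%:R.
Proof.
move=> LL; have [C' C'C] := row_fullP (col_base_full L).
have [R' RR'] := row_freeP (row_base_free L).
move: (col_base L) (row_base L) (mulmx_base L) C'C RR' => Cb Rb CRL C'C RR'.
have CLR : C' *m L *m R' = 1%:M.
  by rewrite -[X in C' *m X]CRL mulmxA C'C mul1mx RR'.
have RC1 : Rb *m Cb = 1%:M.
  have -> : Rb *m Cb = C' *m (Cb *m Rb) *m (Cb *m Rb) *m R'.
    by rewrite !mulmxA C'C mul1mx -!mulmxA RR' mulmx1.
  by rewrite CRL -(mulmxA C') LL CLR.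
by rewrite -[X in \tr X]CRL mxtrace_mulC RC1 mxtrace1.
Qed.

End TraceOfLinMx.

Section Averaging.
Variables (F : numFieldType) (gT : finGroupType) (G : {group gT}).
Local Notation reprG := (mx_representation F G).

Definition intertwines a b (al : reprG a) (be : reprG b) (X : 'M[F]_(a, b)) :=
  forall y, y \in G -> al y *m X = X *m be y.

Definition mx_average a b (al : reprG a) (be : reprG b) (X : 'M[F]_(a, b)) :=
  \sum_(x in G) al (x^-1)%g *m X *m be x.

Lemma mx_average_is_linear a b (al : reprG a) (be : reprG b) :
  linear (mx_average al be).
Proof.
move=> c X Y; rewrite /mx_average scaler_sumr -big_split /=.
by apply: eq_bigr => x _; rewrite mulmxDr mulmxDl -scalemxAr -scalemxAl.
Qed.

HB.instance Definition _ a b (al : reprG a) (be : reprG b) :=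
  GRing.isSemilinear.Build _ _ _ _ (mx_average al be)
    (GRing.semilinear_linear (@mx_average_is_linear a b al be)).

Section Intertwiners.
Variables (a b : nat) (al : reprG a) (be : reprG b).

Lemma mx_average_intertwines X : intertwines al be (mx_average al be X).
Proof.
move=> y Gy; rewrite /mx_average mulmx_sumr mulmx_suml.
rewrite [in RHS](reindex_inj (mulIg (y^-1)%g)) /=.
apply: eq_big => [x|x Gx]; first by rewrite groupMr ?groupV.
rewrite !mulmxA -repr_mxM ?groupV // -!mulmxA -repr_mxM ?groupM ?groupV //.
by rewrite invMg invgK mulgKV.
Qed.

Lemma mx_average_intertwiner X :
  intertwines al be X -> mx_average al be X = #|G|%:R *: X.
Proof.
move=> hX; rewrite /mx_average scaler_nat -sumr_const.
apply: eq_bigr => x Gx; rewrite hX ?groupV // -mulmxA -repr_mxM ?groupV //.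
by rewrite mulVg repr_mx1 mulmx1.
Qed.

Lemma mxtrace_lin_mx_average :
  \tr (lin_mx (mx_average al be)) = \sum_(x in G) \tr (al (x^-1)%g) * \tr (be x).
Proof. exact: mxtrace_lin_mx_sum. Qed.

(* [lin_mx (mx_average al be)] is [#|G|] times a projection onto the space of
   intertwiners, so its trace is [#|G|] times the dimension of that space. *)
Lemma mxtrace_lin_mx_average_neq0 X :
  X != 0 -> intertwines al be X -> \tr (lin_mx (mx_average al be)) != 0.
Proof.
move=> nzX homX.
have nG : (#|G|%:R : F) != 0 by rewrite pnatr_eq0 -lt0n cardG_gt0.
pose L := #|G|%:R^-1 *: lin_mx (mx_average al be).
have LL : L *m L = L.
  apply/row_matrixP => i; rewrite row_mul !rowE /L -!scalemxAr !mul_rV_lin.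
  rewrite linearZ /= mxvecK linearZ /= mx_average_intertwiner; last first.
    exact: mx_average_intertwines.
  by rewrite scalerA mulVf // scale1r.
have nzL : L != 0.
  apply: contraNneq nzX => L0; rewrite -mxvec_eq0.
  have : mxvec X *m L = 0 by rewrite L0 mulmx0.
  rewrite /L -scalemxAr mul_vec_lin /= mx_average_intertwiner // linearZ /=.
  by rewrite scalerA mulVf // scale1r => ->.
have := mxtrace_idem LL; rewrite /L mxtraceZ => trL.
apply: contraNneq nzL => tr0; rewrite -mxrank_eq0 -(eqr_nat F) -trL.
by rewrite tr0 mulr0.
Qed.

Lemma intertwiner_of_mxtrace_neq0 :
  \tr (lin_mx (mx_average al be)) != 0 ->
  exists2 Z : 'M[F]_(a, b), Z != 0 & intertwines al be Z.
Proof.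
move=> ntr; have nzA : lin_mx (mx_average al be) != 0.
  by apply: contraNneq ntr => ->; rewrite mxtrace0.
have [i nzi] : exists i, row i (lin_mx (mx_average al be)) != 0.
  apply/existsP; apply: contraR nzA => /existsPn hi.
  by apply/eqP/row_matrixP => i; rewrite row0; apply/eqP/negbNE.
exists (mx_average al be (vec_mx (delta_mx 0 i))).
  by apply: contraNneq nzi => Z0; rewrite rowE mul_rV_lin /= Z0 linear0.
exact: mx_average_intertwines.
Qed.

End Intertwiners.

(* By [mxtrace_lin_mx_average], the trace of [lin_mx (mx_average al be)] only
   depends on the characters of [al] and [be]. *)
Lemma intertwiner_mxtrace a b c (al : reprG a) (be : reprG b) (ga : reprG c)
    (J : 'M[F]_(a, c)) :
  J != 0 -> intertwines al ga J -> {in G, forall x, \tr (be x) = \tr (ga x)} ->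
  exists2 Z : 'M[F]_(a, b), Z != 0 & intertwines al be Z.
Proof.
move=> nzJ homJ trE; apply: intertwiner_of_mxtrace_neq0.
have := mxtrace_lin_mx_average_neq0 nzJ homJ.
by rewrite !mxtrace_lin_mx_average (eq_bigr _ (fun x Gx => congr1 _ (trE x Gx))).
Qed.

End Averaging.

Section CharacterDeterminesRepr.
Variables (F : numFieldType) (gT : finGroupType) (G : {group gT}).
Local Notation reprG := (mx_representation F G).

Lemma pchar_num_pgroup : ([pchar F]^'.-group G)%g.
Proof. by apply: sub_pgroup (pgroup_pi G) => p _; rewrite inE /= pchar_num. Qed.

Lemma mx_rsim_simple_submod n1 n2 (r1 : reprG n1) (r2 : reprG n2) M
    (modM : mxmodule r1 M) :
  mxsimple r1 M -> {in G, forall x, \tr (r1 x) = \tr (r2 x)} ->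
  exists M2, exists modM2 : mxmodule r2 M2,
    mx_rsim (submod_repr modM) (submod_repr modM2).
Proof.
move=> simM trE; pose al := submod_repr modM.
have [Z nzZ homZ] : exists2 Z : 'M[F]_(\rank M, n2), Z != 0 &
    intertwines al r2 Z.
  apply: (@intertwiner_mxtrace _ _ _ _ _ _ al r2 r1 (val_submod 1%:M)).
  - by rewrite (eqmx_eq0 (val_submod1 M)); case: simM.
  - by move=> y Gy; rewrite -val_submodE -[al y]mul1mx (val_submodJ modM).
  - by move=> x Gx; rewrite trE.
have freeZ : row_free Z.
  have [_ _ irrS] : mx_irreducible al by apply/submod_mx_irr.
  have modK : mxmodule al (kermx Z).
    apply/mxmoduleP => y Gy; apply/sub_kermxP.
    by rewrite -mulmxA homZ // mulmxA mulmx_ker mul0mx.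
  rewrite -kermx_eq0; apply: contraNT nzZ => nzK.
  by have /sub_kermxP := irrS _ modK (submx1 _) nzK; rewrite mul1mx => ->.
pose M2 := (<<Z>>%MS : 'M[F]_n2).
have ZM2 : (Z <= M2)%MS by rewrite genmxE.
have modM2 : mxmodule r2 M2.
  apply/mxmoduleP => y Gy; rewrite /M2 (eqmxMr _ (genmxE Z)) genmxE -homZ //.
  exact: submxMl.
exists M2, modM2; apply: (MxReprSim (B := in_submod M2 Z)).
- by rewrite genmxE; apply/esym/eqP.
- by rewrite /row_free (mxrank_in_submod ZM2).
- move=> y Gy; rewrite -(in_submodJ modM2 y ZM2) -homZ //.
  by rewrite (in_submodE M2 (al y *m Z)) (in_submodE M2 Z) mulmxA.
Qed.

Section Complements.
Variables (n1 n2 : nat) (r1 : reprG n1) (r2 : reprG n2).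
Variables (M1 W1 : 'M[F]_n1) (M2 W2 : 'M[F]_n2).
Hypotheses (modM1 : mxmodule r1 M1) (modW1 : mxmodule r1 W1).
Hypotheses (modM2 : mxmodule r2 M2) (modW2 : mxmodule r2 W2).
Hypotheses (defW1 : (M1 + W1 :=: 1%:M)%MS) (dxW1 : mxdirect (M1 + W1)).
Hypotheses (defW2 : (M2 + W2 :=: 1%:M)%MS) (dxW2 : mxdirect (M2 + W2)).
Hypothesis rsimM : mx_rsim (submod_repr modM1) (submod_repr modM2).

Lemma mxtrace_compl_rsim :
  {in G, forall x, \tr (r1 x) = \tr (r2 x)} ->
  {in G, forall x, \tr (submod_repr modW1 x) = \tr (submod_repr modW2 x)}.
Proof.
move=> trE x Gx; have mod1 := mxmodule1 r1; have mod2 := mxmodule1 r2.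
apply: (addrI (\tr (submod_repr modM1 x))).
rewrite (mxtrace_dadd_mod modM1 modW1 mod1 defW1 dxW1 Gx) (mxtrace_rsim rsimM Gx).
rewrite (mxtrace_dadd_mod modM2 modW2 mod2 defW2 dxW2 Gx).
by rewrite !(mxtrace_submod1 _ (eqmx_refl _) Gx) trE.
Qed.

Lemma mx_rsim_compl_rsim :
  mx_rsim (submod_repr modW1) (submod_repr modW2) -> mx_rsim r1 r2.
Proof.
move=> rsimW; have mod1 := mxmodule1 r1; have mod2 := mxmodule1 r2.
pose rM := Representation (submod_repr modM1).
pose rW := Representation (submod_repr modW1).
have rsim1 := mx_rsim_dadd (rU := rM) (rV := rW) mod1 defW1 dxW1
  (mx_rsim_refl _) (mx_rsim_refl _).
have rsim2 := mx_rsim_dadd (rU := rM) (rV := rW) mod2 defW2 dxW2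
  (mx_rsim_sym rsimM) (mx_rsim_sym rsimW).
apply: mx_rsim_trans (mx_rsim_sym (rsim_submod1 mod1 (eqmx_refl _))) _.
apply: mx_rsim_trans rsim1 (mx_rsim_trans (mx_rsim_sym rsim2) _).
exact: rsim_submod1.
Qed.

End Complements.

Lemma mx_rsim_mxtrace n1 n2 (r1 : reprG n1) (r2 : reprG n2) :
  {in G, forall x, \tr (r1 x) = \tr (r2 x)} -> mx_rsim r1 r2.
Proof.
elim: {n1}_.+1 {-2}n1 (ltnSn n1) n2 r1 r2 => // m IH n1 lt_n1m n2 r1 r2 trE.
have dimE : n1 = n2.
  apply/eqP; rewrite -(eqr_nat F); apply/eqP.
  by rewrite -!mxtrace1 -(repr_mx1 r1) -(repr_mx1 r2) trE.
subst n2; have [n0 | n_gt0] := posnP n1.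
  by subst n1; apply: (MxReprSim (B := 1%:M)) => // [|x Gx];
    [rewrite row_free_unit unitmx1 | apply/matrixP => -[]].
have mod1 := mxmodule1 r1.
have [M simM _] : exists2 M, mxsimple r1 M & (M <= 1%:M)%MS.
  apply: NNPP; apply/classicP; apply: mxsimple_exists mod1 _.
  by rewrite -mxrank_eq0 mxrank1 -lt0n.
have modM := mxsimple_module simM.
have [M2 [modM2 rsimM]] := mx_rsim_simple_submod modM simM trE.
have [W1 modW1 defW1 dxW1] := mx_Maschke_pchar r1 pchar_num_pgroup modM (submx1 M).
have [W2 modW2 defW2 dxW2] :=
  mx_Maschke_pchar r2 pchar_num_pgroup modM2 (submx1 M2).
have ltW1 : (\rank W1 < m)%N.
  have : (\rank M + \rank W1)%N = n1.
    by rewrite -(mxdirectP dxW1) /= (eqmx_rank (introT eqmxP defW1)) mxrank1.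
  have : (0 < \rank M)%N by rewrite lt0n mxrank_eq0; case: simM.
  by move: (\rank M) (\rank W1) lt_n1m => ? ?; lia.
apply: (mx_rsim_compl_rsim defW1 dxW1 defW2 dxW2 rsimM).
apply: (IH _ ltW1).
exact: (mxtrace_compl_rsim modW1 modW2 defW1 dxW1 defW2 dxW2 rsimM trE).
Qed.

End CharacterDeterminesRepr.

Section FiniteMxGroup.
Variables (F : fieldType) (n : nat) (s : seq 'M[F]_n).
Hypotheses (s1 : 1%:M \in s) (sM : {in s &, forall x y, x *m y \in s})
  (sU : {subset s <= unitmx}).

Local Notation T := (seq_sub s).

Definition seq_sub_mul (x y : T) : T := Sub (val x *m val y) (sM (valP x) (valP y)).

Lemma seq_sub_mulI (x : T) : injective (seq_sub_mul^~ x).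
Proof.
move=> y z /(congr1 val) /= /(congr1 (mulmx^~ (invmx (val x)))).
by rewrite !mulmxK ?sU ?(valP x) //; apply: val_inj.
Qed.

Definition rmul_perm (x : T) : {perm T} := perm (@seq_sub_mulI x).

Definition seq_sub_one : T := Sub 1%:M s1.

Lemma rmul_permM x y : (rmul_perm x * rmul_perm y)%g = rmul_perm (seq_sub_mul x y).
Proof. by apply/permP => z; rewrite permM !permE; apply: val_inj; rewrite /= mulmxA. Qed.

Definition rmul_perms : {set {perm T}} := [set rmul_perm x | x : T].

Lemma rmul_perms_group_set : group_set rmul_perms.
Proof.
apply/group_setP; split.
  suff <- : rmul_perm seq_sub_one = 1%g by apply: imset_f.
  by apply/permP => z; rewrite permE perm1; apply: val_inj; rewrite /= mulmx1.
by move=> _ _ /imsetP[x _ ->] /imsetP[y _ ->]; rewrite rmul_permM imset_f.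
Qed.

Definition rmul_group := Group rmul_perms_group_set.

Definition mx_of_rmul (p : {perm T}) : 'M[F]_n := val (p seq_sub_one).

Lemma mx_of_rmul_perm x : mx_of_rmul (rmul_perm x) = val x.
Proof. by rewrite /mx_of_rmul permE /= mul1mx. Qed.

Lemma mx_of_rmul_repr : mx_repr rmul_group mx_of_rmul.
Proof.
split; first by rewrite /mx_of_rmul perm1.
move=> _ _ /imsetP[x _ ->] /imsetP[y _ ->].
by rewrite rmul_permM !mx_of_rmul_perm.
Qed.

End FiniteMxGroup.

Lemma finite_mx_group_repr (F : fieldType) (n : nat) (s : seq 'M[F]_n) :
  1%:M \in s -> {in s &, forall x y, x *m y \in s} -> {subset s <= unitmx} ->
  exists (gT : finGroupType) (G : {group gT}) (r : gT -> 'M[F]_n),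
    [/\ mx_repr G r, {in G, forall g, r g \in s} &
        {in s, forall x, exists2 g, g \in G & r g = x}].
Proof.
move=> s1 sM sU; exists _, (rmul_group s1 sM sU), (mx_of_rmul s1); split.
- exact: mx_of_rmul_repr.
- by move=> _ /imsetP[x _ ->]; rewrite mx_of_rmul_perm (valP x).
- move=> x xs; exists (rmul_perm sM sU (Sub x xs)); first exact: imset_f.
  by rewrite mx_of_rmul_perm.
Qed.

Lemma inSL_unitmx (C : numClosedFieldType) n (g : 'M[C]_n) :
  inSL g -> g \in unitmx.
Proof. by rewrite unitmxE /inSL => ->; rewrite unitr1. Qed.

Section ProjectiveCentralizer.
Variables (C : numClosedFieldType) (n : nat) (xi : C).
Hypotheses (n_gt0 : (0 < n)%N) (hxi : n.-primitive_root xi).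
Variable H : 'M[C]_n -> Prop.
Hypotheses (hH : is_subgroup_SL H) (irrH : irreducible_SL H).

Local Notation U := (U_n xi H).

Lemma pi_eq_sym (x y : 'M[C]_n) : pi_eq xi x y -> pi_eq xi y x.
Proof.
case=> k ->; exists (k * n.-1)%N; rewrite scalerA -exprD -mulnSr prednK //.
by rewrite mulnC exprM (prim_expr_order hxi) expr1n scale1r.
Qed.

Lemma U_n_unitmx x : U x -> x \in unitmx.
Proof. by case=> /inSL_unitmx. Qed.

Lemma U_n_mul x y : U x -> U y -> U (x *m y).
Proof.
move=> [dx hx] [dy hy]; split; first by rewrite /inSL det_mulmx dx dy mulr1.
move=> h Hh; have [k1 e1] := hx h Hh; have [k2 e2] := hy h Hh.
exists (k1 + k2)%N; rewrite -mulmxA e2 -scalemxAr (mulmxA x) e1 -scalemxAl.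
by rewrite scalerA exprD mulrC !mulmxA.
Qed.

Lemma U_n_scalar k : U (xi ^+ k *: 1%:M).
Proof.
split; first by rewrite /inSL scalemx1 det_scalar -exprM mulnC exprM (prim_expr_order hxi) expr1n.
by move=> h Hh; exists 0%N; rewrite expr0 scale1r scalemx1 scalar_mxC.
Qed.

Lemma U_n_1 : U 1%:M.
Proof. by rewrite -[1%:M]scale1r -(expr0 xi); apply: U_n_scalar. Qed.

Lemma U_n_scale k x : U x -> U (xi ^+ k *: x).
Proof.
by move=> Ux; rewrite -[x]mul1mx scalemxAl; apply: U_n_mul (U_n_scalar k) Ux.
Qed.

Lemma U_n_inv x : U x -> U (invmx x).
Proof.
move=> [dx hx]; have ux := inSL_unitmx dx.
split=> [|h Hh]; first by rewrite /inSL det_inv dx invr1.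
apply: pi_eq_sym; have [k e] := hx h Hh; exists k.
rewrite -[h *m _]mul1mx -(mulVmx ux) -!mulmxA (mulmxA x) e -scalemxAl.
by rewrite -scalemxAr !mulmxA mulmxK.
Qed.

(* Schur's lemma; [H] need not be finite, so [mx_abs_irr_cent_scalar] does not
   apply. *)
Lemma irreducible_cent_scalar x :
  (forall h, H h -> x *m h = h *m x) -> exists l, x = l%:M.
Proof.
move=> cx; have [l rt] : exists l, root (char_poly x) l.
  by apply/closed_rootP; rewrite size_char_poly; case: n n_gt0.
have ev : eigenvalue x l by rewrite eigenvalue_root_char.
pose A := x - l%:M.
have cA h : H h -> A *m h = h *m A.
  by move=> Hh; rewrite /A mulmxBl mulmxBr cx // scalar_mxC.
have stable : forall h, H h -> (kermx A^T *m h^T <= kermx A^T)%MS.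
  move=> h Hh; apply/sub_kermxP.
  by rewrite -mulmxA -trmx_mul cA // trmx_mul mulmxA mulmx_ker mul0mx.
have rk := mxrank_ker A^T; rewrite mxrank_tr in rk.
have kA : (0 < n - \rank A)%N by rewrite -mxrank_ker lt0n mxrank_eq0.
exists l; apply/eqP; rewrite -subr_eq0 -mxrank_eq0 -/A.
by case: (irrH stable) => r; rewrite r in rk; lia.
Qed.

Lemma SL_scalar_root l : inSL (l%:M : 'M[C]_n) -> exists k, l = xi ^+ k.
Proof. by rewrite /inSL det_scalar => /(prim_rootP hxi)[k ->]; exists k. Qed.

(* [x h = xi^k h x] gives [\tr x = xi^k \tr x]; so if [\tr x != 0], [x]
   commutes with [H] and is scalar by Schur's lemma. *)
Lemma mxtrace_U_n_nonscalar x :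
  U x -> (forall k, x <> xi ^+ k *: 1%:M) -> \tr x = 0.
Proof.
move=> [dx hx] nsc; apply: NNPP => ntr.
have cx : forall h, H h -> x *m h = h *m x.
  move=> h Hh; have [k e] := hx h Hh.
  have uh : h \in unitmx by apply: inSL_unitmx; case: hH => + _ _ _; apply.
  have : \tr x = xi ^+ k * \tr x.
    by rewrite -{1}(mulmxK uh x) e -scalemxAl mxtraceZ mxtrace_mulC mulKmx.
  move/eqP; rewrite -{1}[\tr x]mul1r -subr_eq0 -mulrBl mulf_eq0 subr_eq0.
  by case/orP => [/eqP ek|/eqP t0 //]; rewrite e -ek scale1r.
have [l xl] := irreducible_cent_scalar cx.
have [k lk] : exists k, l = xi ^+ k by apply: SL_scalar_root; rewrite -xl.
by apply: (nsc k); rewrite xl lk scalemx1.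
Qed.

Lemma mxtrace_invmx_mul_U_n a b :
  U a -> U b -> ~ pi_eq xi a b -> \tr (invmx a *m b) = 0.
Proof.
move=> Ua Ub nab; apply: mxtrace_U_n_nonscalar; first exact: U_n_mul (U_n_inv Ua) Ub.
move=> k e; apply: nab; exists k.
by rewrite -(mulKVmx (U_n_unitmx Ua) b) e -scalemxAr mulmx1.
Qed.

Definition U_transversal (t : seq 'M[C]_n) :=
  [/\ uniq t, {in t, forall x, U x} & {in t &, forall x y, pi_eq xi x y -> x = y}].

Definition U_complete (t : seq 'M[C]_n) :=
  forall u, U u -> exists2 x, x \in t & pi_eq xi x u.

(* Pairwise non-proportional elements of [U] are orthogonal for the trace
   form [(a, b) |-> \tr (a^-1 b)], hence linearly independent. *)
Lemma U_transversal_free t : U_transversal t -> free t.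
Proof.
move=> [ut tU tpi]; apply/(@freeP _ _ _ (in_tuple t)) => c sum0 j.
have tj : t`_j \in t by apply: mem_nth.
have : \tr (invmx t`_j *m \sum_(i < size t) c i *: (in_tuple t)`_i) = 0.
  by rewrite sum0 mulmx0 mxtrace0.
rewrite mulmx_sumr raddf_sum (bigD1 j) //= big1 ?addr0 => [|i nij].
  rewrite -scalemxAr mxtraceZ (mulVmx (U_n_unitmx (tU _ tj))) mxtrace1.
  by move/eqP; rewrite mulf_eq0 pnatr_eq0 (gtn_eqF n_gt0) orbF => /eqP.
have ti : t`_i \in t by apply: mem_nth.
have nij' : ~ pi_eq xi t`_j t`_i.
  move/(tpi _ _ tj ti)/eqP; rewrite nth_uniq // => /eqP/val_inj eji.
  by rewrite eji eqxx in nij.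
by rewrite -scalemxAr mxtraceZ (mxtrace_invmx_mul_U_n (tU _ tj) (tU _ ti) nij') mulr0.
Qed.

Lemma U_transversal_size t : U_transversal t -> (size t <= n * n)%N.
Proof.
move/U_transversal_free => /eqP <-.
by apply: leq_trans (dimvS (subvf _)) _; rewrite dimvf /= dim_matrix.
Qed.

Lemma U_transversal_extend t :
  U_transversal t -> ~ U_complete t -> exists u, U_transversal (rcons t u).
Proof.
move=> [ut tU tpi] nct.
have [u [Uu nu]] : exists u, U u /\ forall x, x \in t -> ~ pi_eq xi x u.
  apply: NNPP => nex; apply: nct => u Uu; apply: NNPP => nxu; apply: nex.
  by exists u; split => // x xt pxu; apply: nxu; exists x.
have ut' : u \notin t by apply/negP => /nu; apply; exists 0%N; rewrite scale1r.
exists u; split; first by rewrite rcons_uniq ut' ut.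
  by move=> x; rewrite mem_rcons inE => /predU1P[->|/tU].
move=> x y; rewrite !mem_rcons !inE.
case/predU1P => [->|xt]; case/predU1P => [->|yt] //; last exact: tpi.
  by move/pi_eq_sym/nu.
by move/nu.
Qed.

Lemma U_transversal_complete : exists t, U_transversal t /\ U_complete t.
Proof.
suff ext d t : U_transversal t -> (n * n - size t <= d)%N ->
    exists t, U_transversal t /\ U_complete t.
  by apply: (ext (n * n)%N [::]) => //; rewrite leq_subr.
elim: d t => [|d IH] t tt le; have [ct|nct] := classic (U_complete t);
  try by exists t.
  have [u tt'] := U_transversal_extend tt nct.
  by have := U_transversal_size tt'; rewrite size_rcons; lia.
have [u tt'] := U_transversal_extend tt nct.
by apply: (IH _ tt'); rewrite size_rcons; lia.
Qed.

Lemma U_n_finite : exists s : seq 'M[C]_n, forall x, U x <-> x \in s.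
Proof.
have [t [[_ tU _] ct]] := U_transversal_complete.
exists [seq xi ^+ k *: x | x <- t, k <- iota 0 n] => x; split.
  move=> Ux; have [y yt [k ->]] := ct x Ux.
  apply/allpairsP; exists (y, (k %% n)%N) => /=.
  by rewrite mem_iota add0n ltn_pmod // prim_expr_mod.
by case/allpairsP => -[y k] /= [yt _ ->]; apply/U_n_scale/tU.
Qed.

End ProjectiveCentralizer.

Lemma conjmx_inj (F : fieldType) n (g x y : 'M[F]_n) : g \in unitmx ->
  g *m x *m invmx g = g *m y *m invmx g -> x = y.
Proof. by move=> ug /(can_inj (mulmxKV ug)) /(can_inj (mulKmx ug)). Qed.

(* [g] is [invmx B] rescaled by an [n]-th root of [\det B]. *)
Lemma SL_conj_of_unitmx (C : numClosedFieldType) n (B : 'M[C]_n) :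
  (0 < n)%N -> B \in unitmx ->
  exists2 g, inSL g & forall u, g *m u *m invmx g = invmx B *m u *m B.
Proof.
move=> n_gt0 uB; pose c := n.-root (\det B); pose g := c *: invmx B.
have dB : \det B != 0 by rewrite -unitfE -unitmxE.
have dg : inSL g by rewrite /inSL detZ det_inv rootCK // divff.
exists g => // u; apply: (canLR (mulmxK (inSL_unitmx dg))).
by rewrite /g -scalemxAl -scalemxAr mulmxK.
Qed.

Section IsoConjugacy.
Variables (C : numClosedFieldType) (n : nat) (xi : C) (H1 H2 : 'M[C]_n -> Prop).
Hypotheses (n_gt0 : (0 < n)%N) (hxi : n.-primitive_root xi).
Hypotheses (hH1 : is_subgroup_SL H1) (hH2 : is_subgroup_SL H2).
Hypotheses (irr1 : irreducible_SL H1) (irr2 : irreducible_SL H2).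
Variable f : 'M[C]_n -> 'M[C]_n.
Hypotheses (isof : group_iso_U xi H1 H2 f)
  (fk : forall k, f (xi ^+ k *: 1%:M) = xi ^+ k *: 1%:M).

Lemma mxtrace_iso_U_n u : U_n xi H1 u -> \tr (f u) = \tr u.
Proof.
move=> Uu; have [fU finj _ _] := isof.
have [[k ->]|nsc] := classic (exists k, u = xi ^+ k *: 1%:M); first by rewrite fk.
have nsc2 k : f u <> xi ^+ k *: 1%:M.
  move=> ek; apply: nsc; exists k.
  by apply: finj => //; [apply: U_n_scalar | rewrite ek fk].
rewrite (mxtrace_U_n_nonscalar n_gt0 hxi hH2 irr2 (fU _ Uu) nsc2).
by rewrite (mxtrace_U_n_nonscalar n_gt0 hxi hH1 irr1 Uu) // => k ek; apply: nsc; exists k.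
Qed.

Lemma iso_U_n_intertwiner :
  exists2 B, B \in unitmx & forall u, U_n xi H1 u -> u *m B = B *m f u.
Proof.
have [_ _ _ fM] := isof.
have [s Us] := U_n_finite n_gt0 hxi hH1 irr1.
have s1 : 1%:M \in s by apply/Us/U_n_1.
have sM : {in s &, forall x y, x *m y \in s}.
  by move=> x y /Us Ux /Us Uy; apply/Us/U_n_mul.
have sU : {subset s <= unitmx} by move=> x /Us/U_n_unitmx.
have [gT [G [r [rrepr rs sr]]]] := finite_mx_group_repr s1 sM sU.
have frepr : mx_repr G (f \o r).
  have [r1 rM] := rrepr; split=> [|x y Gx Gy].
    by rewrite /= r1 -(scale1r 1%:M) -(expr0 xi) fk.
  by rewrite /= rM // fM //; apply/Us/rs.
have [B _ freeB hB] : mx_rsim (MxRepresentation rrepr) (MxRepresentation frepr).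
  apply: mx_rsim_mxtrace => x Gx /=.
  by rewrite mxtrace_iso_U_n //; apply/Us/rs.
exists B; first by rewrite -row_free_unit.
by move=> u /Us /sr[x Gx <-]; apply: hB.
Qed.

Lemma iso_Z_conj_PSL : Z_conj_PSL xi H1 H2.
Proof.
have [B uB hB] := iso_U_n_intertwiner.
have [g dg hg] := SL_conj_of_unitmx n_gt0 uB.
have conjE u : U_n xi H1 u -> g *m u *m invmx g = f u.
  by move=> Uu; rewrite hg -mulmxA hB // mulKmx.
have [fU _ fsurj _] := isof.
exists g; split=> // x dx; split=> [Ux|U2x]; first by rewrite conjE //; apply: fU.
have [y Uy fy] := fsurj _ U2x.
by rewrite -(conjE _ Uy) in fy; rewrite -(conjmx_inj (inSL_unitmx dg) fy).
Qed.

End IsoConjugacy.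

Lemma Z_conj_PSL_iso (C : numClosedFieldType) n (xi : C) (H1 H2 : 'M[C]_n -> Prop) :
  Z_conj_PSL xi H1 H2 ->
  exists2 f, group_iso_U xi H1 H2 f &
    forall k : int, f ((xi ^ k) *: 1%:M) = (xi ^ k) *: 1%:M.
Proof.
case=> g [dg hg]; have ug := inSL_unitmx dg.
exists (fun x => g *m x *m invmx g); last first.
  by move=> k; rewrite scalemx1 scalar_mxC mulmxK.
split=> [x Ux|x y _ _|y Uy|x y _ _]; first exact/(hg x Ux.1).
- exact: conjmx_inj.
- exists (invmx g *m y *m g); last by rewrite !mulmxA mulmxV // mul1mx mulmxK.
  apply/(hg _ _).2; last by rewrite !mulmxA mulmxV // mul1mx mulmxK.
  by rewrite /inSL !det_mulmx det_inv dg Uy.1 invr1 !mulr1.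
- by rewrite !mulmxA mulmxKV.
Qed.

Theorem mainTheorem5 (C : numClosedFieldType) (n : nat) (xi : C)
  (hn : (1 <= n)%N) (hxi : n.-primitive_root xi)
  (H1 H2 : 'M[C]_n -> Prop)
  (hH1 : is_subgroup_SL H1) (hH2 : is_subgroup_SL H2)
  (irr1 : irreducible_SL H1) (irr2 : irreducible_SL H2) :
  Z_conj_PSL xi H1 H2 <->
  exists f : 'M[C]_n -> 'M[C]_n,
    group_iso_U xi H1 H2 f /\
    forall k : int, f ((xi ^ k) *: 1%:M) = (xi ^ k) *: 1%:M.
Proof.
split=> [/Z_conj_PSL_iso[f isof fk] | [f [isof fk]]]; first by exists f.
exact: (iso_Z_conj_PSL hn hxi hH1 hH2 irr1 irr2 isof (fun k => fk k)).
Qed.
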